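(* Let $F$ be an algebraically closed field of characteristic different from $2$ and $3$, and let $K_{10}$ be the Kac Jordan superalgebra over $F$ with basis and multiplication as described in the context. Then every maximal subalgebra of $K_{10}$ is, up to an automorphism of $K_{10}$, one of the following: (i) $(K_{10})_{\bar 0}$; (ii) the subalgebra with basis $\{e,f,a,p_1,p_2\}$; (iii) the subalgebra with basis $\{e,f,a+b,c_1,p_1,q_1,p_2+q_2\}$; (iv) the subalgebra with basis $\{e,f,a,b,c_1,p_1,q_1\}$.
   Context: $K_{10}=J_{\bar 0}\oplus J_{\bar 1}$ has even part $J_{\bar 0}$ with basis $e,a,b,c_1,c_2,f$ and odd part $J_{\bar 1}$ with basis $p_1,p_2,q_1,q_2$. The product is supercommutative ($uv=(-1)^{\bar u\bar v}vu$ for homogeneous $u,v$) and determined by the following products (all products of basis elements not listed, up to supercommutativity, are $0$): $e^2=e$, $ea=a$, $eb=b$, $ec_i=c_i$, $ef=0$, $ep_i=\tfrac12p_i$, $eq_i=\tfrac12 q_i$; $f^2=f$, $fp_i=\tfrac12p_i$, $fq_i=\tfrac12 q_i$ ($f$ annihilates $e,a,b,c_1,c_2$); $a^2=4e$, $ap_i=p_i$, $aq_i=-q_i$; $b^2=-4e$, $bp_i=q_i$, $bq_i=-p_i$; $c_1c_2=2e$, $c_1^2=c_2^2=0$, $c_1p_2=q_1$, $c_1q_2=p_1$, $c_1p_1=c_1q_1=0$, $c_2p_1=q_2$, $c_2q_1=p_2$, $c_2p_2=c_2q_2=0$; $a,b,c_1,c_2$ are pairwise orthogonal in the sense that $ab=ac_i=bc_i=0$;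 $p_1p_2=a+2(e-3f)$, $p_1q_1=2c_1$, $p_1q_2=b$, $p_2q_1=-b$, $p_2q_2=-2c_2$, $q_1q_2=a-2(e-3f)$, and $p_i^2=q_i^2=0$ (odd–odd products are skew-symmetric, e.g. $p_2p_1=-p_1p_2$). This is a simple Jordan superalgebra. Subalgebras are understood in the graded sense (spanned by homogeneous elements); a maximal subalgebra is a proper subalgebra not properly contained in any proper subalgebra. Automorphisms are grading-preserving algebra automorphisms. *)

From HB Require Import structures.
From mathcomp Require Import all_boot all_order all_algebra.
Set Implicit Arguments. Unset Strict Implicit. Unset Printing Implicit Defensive.
Import GRing.Theory.
Local Open Scope ring_scope.

(* Basis indexing: 0 = e, 1 = a, 2 = b, 3 = c1, 4 = c2, 5 = f,
                   6 = p1, 7 = p2, 8 = q1, 9 = q2. *)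

Section K10.
Variable F : fieldType.

Definition V := 'rV[F]_10.

Definition bv (i : nat) : V := delta_mx 0 (inord i).

Definition kE := bv 0. Definition kA := bv 1. Definition kB := bv 2.
Definition kC1 := bv 3. Definition kC2 := bv 4. Definition kF := bv 5.
Definition kP1 := bv 6. Definition kP2 := bv 7.
Definition kQ1 := bv 8. Definition kQ2 := bv 9.

Definition half : F := 2^-1.

Definition tab_le (i j : nat) : V :=
  match i, j with
  | 0, 0 => kE | 0, 1 => kA | 0, 2 => kB | 0, 3 => kC1 | 0, 4 => kC2
  | 0, 6 => half *: kP1 | 0, 7 => half *: kP2
  | 0, 8 => half *: kQ1 | 0, 9 => half *: kQ2
  | 1, 1 => 4%:R *: kE
  | 1, 6 => kP1 | 1, 7 => kP2 | 1, 8 => - kQ1 | 1, 9 => - kQ2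
  | 2, 2 => - (4%:R *: kE)
  | 2, 6 => kQ1 | 2, 7 => kQ2 | 2, 8 => - kP1 | 2, 9 => - kP2
  | 3, 4 => 2%:R *: kE
  | 3, 7 => kQ1 | 3, 9 => kP1
  | 4, 6 => kQ2 | 4, 8 => kP2
  | 5, 5 => kF
  | 5, 6 => half *: kP1 | 5, 7 => half *: kP2
  | 5, 8 => half *: kQ1 | 5, 9 => half *: kQ2
  | 6, 7 => kA + 2%:R *: (kE - 3%:R *: kF)
  | 6, 8 => 2%:R *: kC1
  | 6, 9 => kB
  | 7, 8 => - kB
  | 7, 9 => - (2%:R *: kC2)
  | 8, 9 => kA - 2%:R *: (kE - 3%:R *: kF)
  | _, _ => 0
  end.

Definition is_odd_idx (i : nat) : bool := (6 <= i)%N.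

(* full table, extended by supercommutativity *)
Definition tab (i j : 'I_10) : V :=
  if (i <= j)%N then tab_le i j
  else if is_odd_idx i && is_odd_idx j then - tab_le j i else tab_le j i.

Definition kmul (u v : V) : V :=
  \sum_(i < 10) \sum_(j < 10) (u 0 i * v 0 j) *: tab i j.

Definition evenV : {vspace V} := <<[seq bv i | i <- iota 0 6]>>%VS.
Definition oddV : {vspace V} := <<[seq bv i | i <- iota 6 4]>>%VS.

Definition is_subalg (S : {vspace V}) : Prop :=
  S = ((S :&: evenV) + (S :&: oddV))%VS /\
  (forall u v, u \in S -> v \in S -> kmul u v \in S).

Definition is_maximal_subalg (S : {vspace V}) : Prop :=
  is_subalg S /\ S != fullv /\
  (forall T : {vspace V}, is_subalg T -> T != fullv -> (S <= T)%VS -> T = S).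

Definition is_autom (phi : 'End(V)) : Prop :=
  lker phi = 0%VS /\
  (phi @: evenV <= evenV)%VS /\ (phi @: oddV <= oddV)%VS /\
  (forall u v, phi (kmul u v) = kmul (phi u) (phi v)).

Definition M1 : {vspace V} := evenV.
Definition M2 : {vspace V} := <<[:: kE; kF; kA; kP1; kP2]>>%VS.
Definition M3 : {vspace V} :=
  <<[:: kE; kF; (kA + kB)%R; kC1; kP1; kQ1; (kP2 + kQ2)%R]>>%VS.
Definition M4 : {vspace V} := <<[:: kE; kF; kA; kB; kC1; kP1; kQ1]>>%VS.

End K10.

(* The odd part of K10 is U (+) W with U = span(p1 + q1, p2 - q2) and
   W = span(p1 - q1, p2 + q2), whose vectors are written [uv a b] and [wv c d].
   The automorphisms [upperU s] and [lowerU s] act on U by the elementary matrices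
   [[1, 2s], [0, 1]] and [[1, 0], [2s, 1]] in the coordinates (a, b) and fix W
   pointwise, and [swapUW] exchanges U and W; so a nonzero vector of U (of W) can be
   moved to [uv 1 0] ([wv 1 0]) without disturbing the other summand.
   Let T be a proper graded subalgebra. If T meets U or W, normalise to [uv 1 0] in T;
   since U and W together generate K10, the possible dimensions of T :&: U and
   T :&: W put T, after [swapUW] if needed, inside M3 or M4. Otherwise an odd element
   of T has nonzero components in both U and W, and normalising both gives p1 in T;
   then T lies in M4, or a further automorphism puts p1 and p2 in T and T lies in M2.
   An even T lies in M1, and maximality turns each inclusion into an equality. *)

From Pilot Require Import Defs.
From HB Require Import structures.
From mathcomp Require Import all_boot all_order all_algebra.
From mathcomp Require Import ring.
From Stdlib Require Import Classical.
Local Open Scope ring_scope.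

Set Implicit Arguments. Unset Strict Implicit. Unset Printing Implicit Defensive.
Import GRing.Theory.

(** * Coordinates *)

Section Coordinates.
Variable F : fieldType.
Local Notation V := (V F).

Definition cf (x : V) (k : nat) : F := x 0 (inord k).

Definition kvec (a0 a1 a2 a3 a4 a5 a6 a7 a8 a9 : F) : V :=
  \row_(i < 10) nth 0 [:: a0; a1; a2; a3; a4; a5; a6; a7; a8; a9] i.

Lemma sum_ord10 (R : nmodType) (G : 'I_10 -> R) :
  \sum_(i < 10) G i = G (inord 0) + G (inord 1) + G (inord 2) + G (inord 3)
    + G (inord 4) + G (inord 5) + G (inord 6) + G (inord 7) + G (inord 8) + G (inord 9).
Proof.
rewrite (eq_bigr (fun i : 'I_10 => G (inord i))) => [|i _]; last by rewrite inord_val.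
by rewrite -(big_mkord xpredT (fun k => G (inord k))) unlock /= !addrA addr0.
Qed.

Lemma kvecE (x : V) :
  x = kvec (cf x 0) (cf x 1) (cf x 2) (cf x 3) (cf x 4)
         (cf x 5) (cf x 6) (cf x 7) (cf x 8) (cf x 9).
Proof.
apply/rowP => i; rewrite mxE /cf.
by case: i => -[|[|[|[|[|[|[|[|[|[|//]]]]]]]]]] ? /=; congr (x 0 _);
  apply/val_inj; rewrite /= inordK.
Qed.

Lemma cf_kvec a0 a1 a2 a3 a4 a5 a6 a7 a8 a9 (x := kvec a0 a1 a2 a3 a4 a5 a6 a7 a8 a9) :
  (cf x 0 = a0) * (cf x 1 = a1) * (cf x 2 = a2) * (cf x 3 = a3) * (cf x 4 = a4)
  * (cf x 5 = a5) * (cf x 6 = a6) * (cf x 7 = a7) * (cf x 8 = a8) * (cf x 9 = a9).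
Proof. by rewrite /x /cf !mxE !inordK. Qed.

Lemma kvecD a0 a1 a2 a3 a4 a5 a6 a7 a8 a9 b0 b1 b2 b3 b4 b5 b6 b7 b8 b9 :
  kvec a0 a1 a2 a3 a4 a5 a6 a7 a8 a9 + kvec b0 b1 b2 b3 b4 b5 b6 b7 b8 b9 =
  kvec (a0 + b0) (a1 + b1) (a2 + b2) (a3 + b3) (a4 + b4)
       (a5 + b5) (a6 + b6) (a7 + b7) (a8 + b8) (a9 + b9).
Proof. by apply/rowP => -[[|[|[|[|[|[|[|[|[|[|//]]]]]]]]]] ?]; rewrite !mxE. Qed.

Lemma kvecZ c a0 a1 a2 a3 a4 a5 a6 a7 a8 a9 :
  c *: kvec a0 a1 a2 a3 a4 a5 a6 a7 a8 a9 =
  kvec (c * a0) (c * a1) (c * a2) (c * a3) (c * a4)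
       (c * a5) (c * a6) (c * a7) (c * a8) (c * a9).
Proof. by apply/rowP => -[[|[|[|[|[|[|[|[|[|[|//]]]]]]]]]] ?]; rewrite !mxE. Qed.

Lemma kvecN a0 a1 a2 a3 a4 a5 a6 a7 a8 a9 :
  - kvec a0 a1 a2 a3 a4 a5 a6 a7 a8 a9 =
  kvec (- a0) (- a1) (- a2) (- a3) (- a4) (- a5) (- a6) (- a7) (- a8) (- a9).
Proof. by apply/rowP => -[[|[|[|[|[|[|[|[|[|[|//]]]]]]]]]] ?]; rewrite !mxE. Qed.

Lemma kvec0 : kvec 0 0 0 0 0 0 0 0 0 0 = 0.
Proof. by apply/rowP => -[[|[|[|[|[|[|[|[|[|[|//]]]]]]]]]] ?]; rewrite !mxE. Qed.

Lemma bvE k : (k < 10)%N -> bv F k =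
  kvec (k == 0)%:R (k == 1)%:R (k == 2)%:R (k == 3)%:R (k == 4)%:R
       (k == 5)%:R (k == 6)%:R (k == 7)%:R (k == 8)%:R (k == 9)%:R.
Proof.
move=> lt_k10; apply/rowP => i; rewrite !mxE /= -val_eqE /= inordK // eq_sym.
by case: i => -[|[|[|[|[|[|[|[|[|[|//]]]]]]]]]].
Qed.

Lemma cfD (x y : V) k : cf (x + y) k = cf x k + cf y k. Proof. by rewrite /cf mxE. Qed.
Lemma cfZ c (x : V) k : cf (c *: x) k = c * cf x k. Proof. by rewrite /cf mxE. Qed.
Lemma cf0 k : cf (0 : V) k = 0. Proof. by rewrite /cf mxE. Qed.

Lemma basisE :
  (kE F = kvec 1 0 0 0 0 0 0 0 0 0) * (kA F = kvec 0 1 0 0 0 0 0 0 0 0)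
  * (kB F = kvec 0 0 1 0 0 0 0 0 0 0) * (kC1 F = kvec 0 0 0 1 0 0 0 0 0 0)
  * (kC2 F = kvec 0 0 0 0 1 0 0 0 0 0) * (kF F = kvec 0 0 0 0 0 1 0 0 0 0)
  * (kP1 F = kvec 0 0 0 0 0 0 1 0 0 0) * (kP2 F = kvec 0 0 0 0 0 0 0 1 0 0)
  * (kQ1 F = kvec 0 0 0 0 0 0 0 0 1 0) * (kQ2 F = kvec 0 0 0 0 0 0 0 0 0 1).
Proof. by rewrite /kE /kA /kB /kC1 /kC2 /kF /kP1 /kP2 /kQ1 /kQ2 !bvE. Qed.

Lemma kmul_kvec a0 a1 a2 a3 a4 a5 a6 a7 a8 a9 b0 b1 b2 b3 b4 b5 b6 b7 b8 b9 :
  kmul (kvec a0 a1 a2 a3 a4 a5 a6 a7 a8 a9) (kvec b0 b1 b2 b3 b4 b5 b6 b7 b8 b9) = kvec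
  (a0 * b0 + 4%:R * (a1 * b1) - 4%:R * (a2 * b2) + 2%:R * (a3 * b4 + a4 * b3)
     + 2%:R * (a6 * b7 - a7 * b6) - 2%:R * (a8 * b9 - a9 * b8))
  (a0 * b1 + a1 * b0 + (a6 * b7 - a7 * b6) + (a8 * b9 - a9 * b8))
  (a0 * b2 + a2 * b0 + (a6 * b9 - a9 * b6) - (a7 * b8 - a8 * b7))
  (a0 * b3 + a3 * b0 + 2%:R * (a6 * b8 - a8 * b6))
  (a0 * b4 + a4 * b0 - 2%:R * (a7 * b9 - a9 * b7))
  (a5 * b5 - 6%:R * (a6 * b7 - a7 * b6) + 6%:R * (a8 * b9 - a9 * b8))
  (2%:R^-1 * ((a0 + a5) * b6 + a6 * (b0 + b5)) + (a1 * b6 + a6 * b1)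
     - (a2 * b8 + a8 * b2) + (a3 * b9 + a9 * b3))
  (2%:R^-1 * ((a0 + a5) * b7 + a7 * (b0 + b5)) + (a1 * b7 + a7 * b1)
     - (a2 * b9 + a9 * b2) + (a4 * b8 + a8 * b4))
  (2%:R^-1 * ((a0 + a5) * b8 + a8 * (b0 + b5)) - (a1 * b8 + a8 * b1)
     + (a2 * b6 + a6 * b2) + (a3 * b7 + a7 * b3))
  (2%:R^-1 * ((a0 + a5) * b9 + a9 * (b0 + b5)) - (a1 * b9 + a9 * b1)
     + (a2 * b7 + a7 * b2) + (a4 * b6 + a6 * b4)).
Proof.
rewrite /kmul !sum_ord10 /tab !inordK //= /tab_le /= !basisE ?scaler0 ?addr0 ?add0r.
rewrite !mxE !inordK //= !(kvecZ, kvecN, kvecD) /Defs.half.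
by congr kvec; ring.
Qed.

End Coordinates.

Lemma span_ind (K : fieldType) (vT : vectType K) (P : vT -> Prop) (s : seq vT) :
  P 0 -> (forall x y, P x -> P y -> P (x + y)) -> (forall c x, P x -> P (c *: x)) ->
  {in s, forall g, P g} -> {in <<s>>%VS, forall x, P x}.
Proof.
move=> P0 PD PZ; elim: s => [_ x | g s IHs Ps x].
  by rewrite span_nil memv0 => /eqP ->.
rewrite span_cons => /memv_addP [_ /vlineP [k ->] [y ys ->]].
apply: PD; first by apply/PZ/Ps; rewrite inE eqxx.
by apply: IHs ys => h hs; apply: Ps; rewrite inE hs orbT.
Qed.

Ltac split_hyps :=
  repeat match goal with
  | H : _ /\ _ |- _ => destruct H | H : [/\ _, _ & _] |- _ => destruct H
  | H : [/\ _, _, _ & _] |- _ => destruct H | H : [/\ _, _, _, _ & _] |- _ => destruct H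
  end;
  repeat match goal with H : cf _ _ = _ |- _ => rewrite H; clear H end.

Section Membership.
Variable F : fieldType.
Local Notation V := (V F).

(* Proves [x \in <<s>> -> P x] for [P] a conjunction of linear equations in the
   coordinates of [x], by checking [P] on each generator in [s]. *)
Ltac span_coords :=
  apply: span_ind => [|x y hx hy|c x hx|];
  [ rewrite !cf0 | rewrite !cfD; split_hyps | rewrite !cfZ; split_hyps
  | move=> g /=; rewrite !inE; repeat (case/orP; [move/eqP-> | ]); try move/eqP->;
    rewrite ?basisE ?bvE // ?kvecD !cf_kvec ];
  repeat split; ring.

Ltac in_span := repeat first
  [ by apply: memv_span; rewrite /= !inE eqxx ?orbT | apply: rpredZ | apply: rpredD ].

Lemma mem_evenV (x : V) :
  x \in evenV F <-> [/\ cf x 6 = 0, cf x 7 = 0, cf x 8 = 0 & cf x 9 = 0].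
Proof.
split=> [|[h6 h7 h8 h9]]; first by move: x; span_coords.
rewrite (kvecE x) h6 h7 h8 h9.
have -> : kvec (cf x 0) (cf x 1) (cf x 2) (cf x 3) (cf x 4) (cf x 5) 0 0 0 0 =
    cf x 0 *: kE F + cf x 1 *: kA F + cf x 2 *: kB F + cf x 3 *: kC1 F
    + cf x 4 *: kC2 F + cf x 5 *: kF F.
  by rewrite !basisE !kvecZ !kvecD; congr kvec; ring.
by in_span.
Qed.

Lemma mem_oddV (x : V) : x \in oddV F <->
  [/\ cf x 0 = 0, cf x 1 = 0, cf x 2 = 0, cf x 3 = 0 & cf x 4 = 0 /\ cf x 5 = 0].
Proof.
split=> [|[h0 h1 h2 h3 [h4 h5]]]; first by move: x; span_coords.
rewrite (kvecE x) h0 h1 h2 h3 h4 h5.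
have -> : kvec 0 0 0 0 0 0 (cf x 6) (cf x 7) (cf x 8) (cf x 9) =
    cf x 6 *: kP1 F + cf x 7 *: kP2 F + cf x 8 *: kQ1 F + cf x 9 *: kQ2 F.
  by rewrite !basisE !kvecZ !kvecD; congr kvec; ring.
by in_span.
Qed.

Lemma mem_M2 (x : V) : x \in M2 F <->
  [/\ cf x 2 = 0, cf x 3 = 0, cf x 4 = 0, cf x 8 = 0 & cf x 9 = 0].
Proof.
split=> [|[h2 h3 h4 h8 h9]]; first by move: x; span_coords.
rewrite (kvecE x) h2 h3 h4 h8 h9.
have -> : kvec (cf x 0) (cf x 1) 0 0 0 (cf x 5) (cf x 6) (cf x 7) 0 0 =
    cf x 0 *: kE F + cf x 5 *: kF F + cf x 1 *: kA F + cf x 6 *: kP1 F + cf x 7 *: kP2 F.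
  by rewrite !basisE !kvecZ !kvecD; congr kvec; ring.
by in_span.
Qed.

Lemma mem_M3 (x : V) : x \in M3 F <-> [/\ cf x 2 = cf x 1, cf x 4 = 0 & cf x 9 = cf x 7].
Proof.
split=> [|[h2 h4 h9]]; first by move: x; span_coords.
rewrite (kvecE x) h2 h4 h9.
have -> : kvec (cf x 0) (cf x 1) (cf x 1) (cf x 3) 0 (cf x 5) (cf x 6) (cf x 7) (cf x 8) (cf x 7) =
    cf x 0 *: kE F + cf x 5 *: kF F + cf x 1 *: (kA F + kB F) + cf x 3 *: kC1 F
    + cf x 6 *: kP1 F + cf x 8 *: kQ1 F + cf x 7 *: (kP2 F + kQ2 F).
  by rewrite !basisE !kvecD !kvecZ !kvecD; congr kvec; ring.
by in_span.
Qed.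

Lemma mem_M4 (x : V) : x \in M4 F <-> [/\ cf x 4 = 0, cf x 7 = 0 & cf x 9 = 0].
Proof.
split=> [|[h4 h7 h9]]; first by move: x; span_coords.
rewrite (kvecE x) h4 h7 h9.
have -> : kvec (cf x 0) (cf x 1) (cf x 2) (cf x 3) 0 (cf x 5) (cf x 6) 0 (cf x 8) 0 =
    cf x 0 *: kE F + cf x 5 *: kF F + cf x 1 *: kA F + cf x 2 *: kB F + cf x 3 *: kC1 F
    + cf x 6 *: kP1 F + cf x 8 *: kQ1 F.
  by rewrite !basisE !kvecZ !kvecD; congr kvec; ring.
by in_span.
Qed.

End Membership.

(** * Graded subalgebras and automorphisms *)

Section GradedSubalgebras.
Variable F : fieldType.
Local Notation V := (V F).

Definition even_part (x : V) : V :=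
  kvec (cf x 0) (cf x 1) (cf x 2) (cf x 3) (cf x 4) (cf x 5) 0 0 0 0.
Definition odd_part (x : V) : V := kvec 0 0 0 0 0 0 (cf x 6) (cf x 7) (cf x 8) (cf x 9).

Lemma even_add_odd_part (x : V) : even_part x + odd_part x = x.
Proof. by rewrite [RHS]kvecE kvecD; congr kvec; ring. Qed.

Lemma even_part_even (x : V) : even_part x \in evenV F.
Proof. by apply/mem_evenV; rewrite !cf_kvec. Qed.

Lemma odd_part_odd (x : V) : odd_part x \in oddV F.
Proof. by apply/mem_oddV; rewrite !cf_kvec. Qed.

Lemma even_part_id (x : V) : x \in evenV F -> even_part x = x.
Proof. by case/mem_evenV=> h6 h7 h8 h9; rewrite [RHS]kvecE h6 h7 h8 h9. Qed.

Lemma even_part_odd (x : V) : x \in oddV F -> even_part x = 0.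
Proof. by case/mem_oddV=> h0 h1 h2 h3 [h4 h5]; rewrite /even_part h0 h1 h2 h3 h4 h5 kvec0. Qed.

Lemma even_partD (x y : V) : even_part (x + y) = even_part x + even_part y.
Proof. by rewrite /even_part !cfD kvecD; congr kvec; ring. Qed.

Definition subalgebra (T : {vspace V}) : Prop :=
  (forall x, x \in T -> even_part x \in T) /\
  (forall x y, x \in T -> y \in T -> kmul x y \in T).

Lemma subalg_odd_part (T : {vspace V}) : subalgebra T -> {in T, forall x, odd_part x \in T}.
Proof.
case=> evT _ x xT; rewrite -[odd_part x](addKr (even_part x)) even_add_odd_part.
by rewrite rpredD ?rpredN ?evT.
Qed.

Lemma is_subalgP (T : {vspace V}) : is_subalg T <-> subalgebra T.
Proof.
split=> [[defT mulT] | subT].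
  split=> // x; rewrite [in X in X -> _]defT.
  case/memv_addP=> [y /memv_capP [yT yE] [z /memv_capP [_ zO] ->]].
  by rewrite even_partD even_part_id // even_part_odd // addr0.
split; last by case: subT.
apply/eqP; rewrite eqEsubv subv_add !capvSl !andbT; apply/subvP => x xT.
rewrite -(even_add_odd_part x) memv_add // memv_cap.
  by rewrite even_part_even andbT; case: subT => ->.
by rewrite odd_part_odd (subalg_odd_part subT).
Qed.

End GradedSubalgebras.

Section Standard.
Variable F : fieldType.

Ltac std_subalg memP := split;
  [ let x := fresh "x" in let hx := fresh "hx" in
    move=> x hx; case/memP: hx => *; apply/memP; rewrite /even_part !cf_kvec
  | let x := fresh "x" in let y := fresh "y" in
    let hx := fresh "hx" in let hy := fresh "hy" in
    move=> x y hx hy; case/memP: hx => *; case/memP: hy => *; apply/memP;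
    rewrite [x]kvecE [y]kvecE kmul_kvec !cf_kvec ];
  split_hyps; split; ring.

Lemma subalg_M1 : subalgebra (M1 F). Proof. std_subalg mem_evenV. Qed.
Lemma subalg_M2 : subalgebra (M2 F). Proof. std_subalg mem_M2. Qed.
Lemma subalg_M3 : subalgebra (M3 F). Proof. std_subalg mem_M3. Qed.
Lemma subalg_M4 : subalgebra (M4 F). Proof. std_subalg mem_M4. Qed.

Lemma M1_proper : M1 F != fullv.
Proof.
apply/eqP => full; have := memvf (kP1 F); rewrite -full => /mem_evenV [/eqP].
by rewrite basisE cf_kvec oner_eq0.
Qed.

Lemma M2_proper : M2 F != fullv.
Proof.
apply/eqP => full; have := memvf (kC2 F); rewrite -full => /mem_M2 [_ _ /eqP].
by rewrite basisE cf_kvec oner_eq0.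
Qed.

Lemma M3_proper : M3 F != fullv.
Proof.
apply/eqP => full; have := memvf (kC2 F); rewrite -full => /mem_M3 [_ /eqP].
by rewrite basisE cf_kvec oner_eq0.
Qed.

Lemma M4_proper : M4 F != fullv.
Proof.
apply/eqP => full; have := memvf (kC2 F); rewrite -full => /mem_M4 [/eqP].
by rewrite basisE cf_kvec oner_eq0.
Qed.

End Standard.

Section Automorphisms.
Variable F : fieldType.
Local Notation V := (V F).
Implicit Types (phi psi : 'End(V)) (S T : {vspace V}).

Lemma autom_inj phi : is_autom phi -> injective phi.
Proof. by case=> kerphi _; apply/lker0P; rewrite kerphi. Qed.

Lemma autom_surj phi y : is_autom phi -> exists x, y = phi x.
Proof.
case=> kerphi _; have : y \in limg phi by rewrite lker0_limgf ?kerphi ?memvf.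
by case/memv_imgP=> x _ ->; exists x.
Qed.

Lemma autom_id : is_autom (\1%VF : 'End(V)).
Proof.
split; first by apply/eqP/lker0P => x y; rewrite !id_lfunE.
by rewrite !lim1g; split=> //; split=> // u v; rewrite !id_lfunE.
Qed.

Lemma autom_comp phi psi : is_autom phi -> is_autom psi -> is_autom (psi \o phi)%VF.
Proof.
move=> autphi autpsi; have [_ [Ephi [Ophi mulphi]]] := autphi.
have [_ [Epsi [Opsi mulpsi]]] := autpsi.
split.
  by apply/eqP/lker0P => x y; rewrite !comp_lfunE => /(autom_inj autpsi) /(autom_inj autphi).
rewrite !limg_comp; split; first exact: subv_trans (limgS _ Ephi) Epsi.
split; first exact: subv_trans (limgS _ Ophi) Opsi.
by move=> u v; rewrite !comp_lfunE mulphi mulpsi.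
Qed.

Lemma autom_even_part phi x : is_autom phi -> phi (even_part x) = even_part (phi x).
Proof.
case=> _ [Ephi [Ophi _]]; rewrite -{2}(even_add_odd_part x) linearD even_partD.
have phiE : phi (even_part x) \in evenV F by rewrite (subvP Ephi) ?memv_img ?even_part_even.
have phiO : phi (odd_part x) \in oddV F by rewrite (subvP Ophi) ?memv_img ?odd_part_odd.
by rewrite (even_part_id phiE) (even_part_odd phiO) addr0.
Qed.

Lemma subalg_img phi T : is_autom phi -> subalgebra T -> subalgebra (phi @: T).
Proof.
move=> autphi [evT mulT]; have [_ [_ [_ mulphi]]] := autphi; split.
  by move=> _ /memv_imgP [x xT ->]; rewrite -autom_even_part // memv_img ?evT.
move=> _ _ /memv_imgP [x xT ->] /memv_imgP [y yT ->].
by rewrite -mulphi memv_img ?mulT.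
Qed.

Lemma autom_img_proper phi T : is_autom phi -> T != fullv -> (phi @: T)%VS != fullv.
Proof.
case=> kerphi _; apply: contra => /eqP imgT.
have dimT : \dim (phi @: T) = \dim T by rewrite limg_dim_eq // kerphi capv0.
by rewrite eqEdim subvf /= -dimT imgT.
Qed.

Lemma maximal_img_eq phi S T : is_maximal_subalg S -> is_autom phi ->
  subalgebra T -> T != fullv -> (phi @: S <= T)%VS -> (phi @: S)%VS = T.
Proof.
move=> [_ [_ maxS]] autphi [evT mulT] properT sub_ST.
have [_ [_ [_ mulphi]]] := autphi.
pose T' := (phi @^-1: T)%VS.
have subT' : subalgebra T'.
  split=> [x | x y]; rewrite -!memv_preim; first by rewrite autom_even_part //; apply: evT.
  by rewrite mulphi; apply: mulT.
have properT' : T' != fullv.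
  apply: contra properT => /eqP fullT'; rewrite eqEsubv subvf; apply/subvP => y _.
  by have [x ->] := autom_surj y autphi; rewrite memv_preim -/T' fullT' memvf.
have sub_ST' : (S <= T')%VS.
  by apply/subvP => x xS; rewrite -memv_preim (subvP sub_ST) ?memv_img.
have defS := maxS T' (proj2 (is_subalgP T') subT') properT' sub_ST'.
apply/eqP; rewrite eqEsubv sub_ST; apply/subvP => y yT.
by have [x eyx] := autom_surj y autphi; rewrite eyx memv_img // -defS -memv_preim -eyx.
Qed.

Definition conj_std T : Prop := exists psi : 'End(V), is_autom psi /\
  [\/ (psi @: T <= M1 F)%VS, (psi @: T <= M2 F)%VS, (psi @: T <= M3 F)%VS
    | (psi @: T <= M4 F)%VS].

Lemma conj_std_img phi T : is_autom phi -> conj_std (phi @: T) -> conj_std T.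
Proof.
move=> autphi [psi [autpsi subM]]; exists (psi \o phi)%VF.
by rewrite limg_comp; split=> //; apply: autom_comp.
Qed.

Lemma sub_conj_std T :
  [\/ (T <= M1 F)%VS, (T <= M2 F)%VS, (T <= M3 F)%VS | (T <= M4 F)%VS] -> conj_std T.
Proof. by exists \1%VF; rewrite lim1g; split=> //; apply: autom_id. Qed.

End Automorphisms.

Section Endomorphisms.
Variable F : fieldType.
Local Notation V := (V F).

Definition endo (f : V -> V) : 'End(V) := linfun (mulmxr (\matrix_(i < 10) f (bv F i))).

Section LinearMap.
Variable f : V -> V.
Hypothesis f_lin : forall a (u v : V), f (a *: u + v) = a *: f u + f v.

Let f0 : f 0 = 0.
Proof. by apply: (addrI (f 0)); rewrite -{1}(scale1r (f 0)) -f_lin scale1r !addr0. Qed.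

Lemma endoE : endo f =1 f.
Proof.
have fD u v : f (u + v) = f u + f v by have := f_lin 1 u v; rewrite !scale1r.
have fZ a u : f (a *: u) = a *: f u by have := f_lin a u 0; rewrite f0 !addr0.
move=> x; rewrite lfunE /= mulmx_sum_row {2}[x]row_sum_delta (big_morph f fD f0).
by apply: eq_bigr => i _; rewrite rowK fZ /bv inord_val.
Qed.

Lemma autom_endo (g : V -> V) : (forall x, g (f x) = x) ->
  (forall x, f (even_part x) = even_part (f x)) ->
  (forall x y, f (kmul x y) = kmul (f x) (f y)) ->
  is_autom (endo f).
Proof.
move=> fK f_even f_mul; split; first by apply/eqP/lker0P => x y; rewrite !endoE => /(can_inj fK).
have even_part0 (y : V) : even_part y = 0 -> y \in oddV F.
  by move=> y0; rewrite -(even_add_odd_part y) y0 add0r odd_part_odd.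
split.
  apply/subvP => _ /memv_imgP [x xE ->].
  by rewrite endoE -(even_part_id xE) f_even even_part_even.
split.
  apply/subvP => _ /memv_imgP [x xO ->].
  by rewrite endoE even_part0 // -f_even even_part_odd.
by move=> u v; rewrite !endoE f_mul.
Qed.

End LinearMap.
End Endomorphisms.

(** * Automorphisms moving U and W *)

Section KacAutomorphisms.
Variable F : fieldType.
Local Notation V := (V F).

Definition uv (a b : F) : V := a *: (kP1 F + kQ1 F) + b *: (kP2 F - kQ2 F).
Definition wv (c d : F) : V := c *: (kP1 F - kQ1 F) + d *: (kP2 F + kQ2 F).

Lemma uvE a b : uv a b = kvec 0 0 0 0 0 0 a b a (- b).
Proof. by rewrite /uv !basisE !(kvecN, kvecD, kvecZ); congr kvec; ring. Qed.

Lemma wvE c d : wv c d = kvec 0 0 0 0 0 0 c d (- c) d.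
Proof. by rewrite /wv !basisE !(kvecN, kvecD, kvecZ); congr kvec; ring. Qed.

Lemma uv_split a b : uv a b = a *: uv 1 0 + b *: uv 0 1.
Proof. by rewrite /uv !scale1r !scale0r addr0 add0r. Qed.

Lemma wv_split c d : wv c d = c *: wv 1 0 + d *: wv 0 1.
Proof. by rewrite /wv !scale1r !scale0r addr0 add0r. Qed.

Definition upperU_fun (s : F) (x : V) : V :=
  kvec (cf x 0) (cf x 1 - s * cf x 4) (cf x 2 - s * cf x 4)
    (cf x 3 + 2%:R * s * (cf x 1 - cf x 2)) (cf x 4) (cf x 5)
    (cf x 6 + s * (cf x 7 - cf x 9)) (cf x 7) (cf x 8 + s * (cf x 7 - cf x 9)) (cf x 9).

Definition lowerU_fun (s : F) (x : V) : V :=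
  kvec (cf x 0) (cf x 1 + s * cf x 3) (cf x 2 - s * cf x 3)
    (cf x 3) (cf x 4 - 2%:R * s * (cf x 1 + cf x 2)) (cf x 5)
    (cf x 6) (cf x 7 + s * (cf x 6 + cf x 8)) (cf x 8) (cf x 9 - s * (cf x 6 + cf x 8)).

Definition swapUW_fun (x : V) : V :=
  kvec (cf x 0) (cf x 1) (- cf x 2) (- cf x 3) (- cf x 4) (cf x 5)
    (cf x 6) (cf x 7) (- cf x 8) (- cf x 9).

Ltac kvec_fun_ring := rewrite /upperU_fun /lowerU_fun /swapUW_fun /even_part;
  rewrite ?kmul_kvec !(kvecZ, kvecD, cf_kvec) ?kmul_kvec; congr kvec; ring.

Ltac coords := repeat match goal with x : Defs.V _ |- _ =>
  rewrite [x]kvecE; generalize (cf x 0) (cf x 1) (cf x 2) (cf x 3) (cf x 4)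
    (cf x 5) (cf x 6) (cf x 7) (cf x 8) (cf x 9); clear x; intros end.

Ltac autom_fun inv := apply: (@autom_endo _ _ _ inv); intros; coords; kvec_fun_ring.

Definition upperU s : 'End(V) := endo (upperU_fun s).
Definition lowerU s : 'End(V) := endo (lowerU_fun s).
Definition swapUW : 'End(V) := endo swapUW_fun.

Ltac endo_fun := apply: endoE; intros; coords; kvec_fun_ring.

Lemma upperUE s : upperU s =1 upperU_fun s. Proof. endo_fun. Qed.
Lemma lowerUE s : lowerU s =1 lowerU_fun s. Proof. endo_fun. Qed.
Lemma swapUWE : swapUW =1 swapUW_fun. Proof. endo_fun. Qed.

Lemma autom_upperU s : is_autom (upperU s).
Proof. autom_fun (upperU_fun (- s)). Qed.

Lemma autom_lowerU s : is_autom (lowerU s).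
Proof. autom_fun (lowerU_fun (- s)). Qed.

Lemma autom_swapUW : is_autom swapUW.
Proof. autom_fun swapUW_fun. Qed.

Lemma upperU_uv s a b : upperU s (uv a b) = uv (a + 2%:R * s * b) b.
Proof. by rewrite upperUE !uvE; kvec_fun_ring. Qed.

Lemma upperU_wv s c d : upperU s (wv c d) = wv c d.
Proof. by rewrite upperUE !wvE; kvec_fun_ring. Qed.

Lemma lowerU_uv s a b : lowerU s (uv a b) = uv a (b + 2%:R * s * a).
Proof. by rewrite lowerUE !uvE; kvec_fun_ring. Qed.

Lemma lowerU_wv s c d : lowerU s (wv c d) = wv c d.
Proof. by rewrite lowerUE !wvE; kvec_fun_ring. Qed.

Lemma swapUW_uv a b : swapUW (uv a b) = wv a b.
Proof. by rewrite swapUWE uvE wvE; kvec_fun_ring. Qed.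

Lemma swapUW_wv c d : swapUW (wv c d) = uv c d.
Proof. by rewrite swapUWE uvE wvE; kvec_fun_ring. Qed.

Lemma odd_part_uv_wv x : 2%:R *: odd_part x =
  uv (cf x 6 + cf x 8) (cf x 7 - cf x 9) + wv (cf x 6 - cf x 8) (cf x 7 + cf x 9).
Proof. by rewrite uvE wvE /odd_part kvecZ kvecD; congr kvec; ring. Qed.

Hypothesis two_neq0 : (2%:R : F) != 0.

Lemma kP1_uv_wv : kP1 F = 2%:R^-1 *: (uv 1 0 + wv 1 0).
Proof. by rewrite uvE wvE basisE kvecD kvecZ; congr kvec; field. Qed.

Lemma kP2_uv_wv : kP2 F = 2%:R^-1 *: (uv 0 1 + wv 0 1).
Proof. by rewrite uvE wvE basisE kvecD kvecZ; congr kvec; field. Qed.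

Lemma orbit_uv a b : (a != 0) || (b != 0) -> exists phi : 'End(V),
  [/\ is_autom phi, forall c d, phi (wv c d) = wv c d & phi (uv a b) = uv 1 0].
Proof.
wlog b_neq0 : a b / b != 0 => [reduce | _].
  have [-> | b_neq0 _] := eqVneq b 0; last by apply: (reduce a b b_neq0); rewrite b_neq0 orbT.
  rewrite /= orbF => a_neq0.
  have := reduce a a a_neq0; rewrite a_neq0 => /(_ isT) [phi [autphi fixW phiE]].
  exists (phi \o lowerU 2%:R^-1)%VF; split; first exact: autom_comp (autom_lowerU _) autphi.
    by move=> c d; rewrite comp_lfunE lowerU_wv fixW.
  by rewrite comp_lfunE lowerU_uv -phiE; congr (phi (uv _ _)); field.
exists (lowerU (- (2%:R^-1 * b)) \o upperU ((1 - a) / (2%:R * b)))%VF; split.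
- exact: autom_comp (autom_upperU _) (autom_lowerU _).
- by move=> c d; rewrite comp_lfunE upperU_wv lowerU_wv.
- by rewrite comp_lfunE upperU_uv lowerU_uv; congr uv; field; rewrite ?two_neq0 ?b_neq0.
Qed.

Lemma orbit_wv c d : (c != 0) || (d != 0) -> exists phi : 'End(V),
  [/\ is_autom phi, forall a b, phi (uv a b) = uv a b & phi (wv c d) = wv 1 0].
Proof.
case/orbit_uv=> phi [autphi phiW phi_cd]; exists (swapUW \o phi \o swapUW)%VF; split.
- exact: autom_comp autom_swapUW (autom_comp autphi autom_swapUW).
- by move=> a b; rewrite !comp_lfunE swapUW_uv phiW swapUW_wv.
- by rewrite !comp_lfunE swapUW_wv phi_cd swapUW_uv.
Qed.

End KacAutomorphisms.

Arguments swapUW {F}.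
Arguments autom_swapUW {F}.

Lemma lincomb_notin (K : fieldType) (vT : vectType K) (U : {vspace vT}) (u v : vT) a b :
  u \in U -> v \notin U -> a *: u + b *: v \in U -> b = 0.
Proof.
move=> uU vU abU; have : b *: v \in U by rewrite -(addKr (a *: u) (b *: v)) rpredD ?rpredN ?rpredZ.
by rewrite rpredZeq (negbTE vU) orbF => /eqP.
Qed.

(** * Subalgebras containing prescribed odd vectors *)

Section Containment.
Variable F : fieldType.
Hypotheses (two_neq0 : (2%:R : F) != 0) (three_neq0 : (3%:R : F) != 0).
Local Notation V := (V F).
Local Notation uv := (@uv F).
Local Notation wv := (@wv F).

Definition avoids (g : F -> F -> V) (T : {vspace V}) := forall a b, g a b \in T -> a = 0 /\ b = 0.

Ltac vsolve := repeat match goal with v := _ |- _ => subst v end;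
  rewrite ?(uvE, wvE, basisE) /odd_part /even_part;
  rewrite ?(kvecZ, kvecD, kvecN, kmul_kvec, cf_kvec) ?kmul_kvec ?(kvecZ, kvecD, kvecN);
  congr kvec; field; rewrite ?two_neq0 ?three_neq0.

Variable T : {vspace V}.
Hypothesis subT : subalgebra T.

Let evT := proj1 subT.
Let mulT := proj2 subT.
Let oddT := subalg_odd_part subT.

Ltac memT := repeat first [ done | apply: rpredB | apply: rpredD | rewrite rpredN
  | apply: rpredZ | apply: mulT | apply: evT | apply: oddT ].

Ltac as_comb e := match goal with |- is_true (?x \in _) =>
  rewrite (_ : x = e); [by memT | by vsolve] end.

Lemma subalg_UW_fullv : uv 1 0 \in T -> uv 0 1 \in T -> wv 1 0 \in T -> wv 0 1 \in T ->
  T = fullv.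
Proof.
move=> u1 u2 w1 w2.
have p1 : kP1 F \in T by as_comb (2%:R^-1 *: (uv 1 0 + wv 1 0)).
have p2 : kP2 F \in T by as_comb (2%:R^-1 *: (uv 0 1 + wv 0 1)).
have q1 : kQ1 F \in T by as_comb (2%:R^-1 *: (uv 1 0 - wv 1 0)).
have q2 : kQ2 F \in T by as_comb (2%:R^-1 *: (wv 0 1 - uv 0 1)).
have c1 : kC1 F \in T by as_comb (2%:R^-1 *: kmul (kP1 F) (kQ1 F)).
have c2 : kC2 F \in T by as_comb (- 2%:R^-1 *: kmul (kP2 F) (kQ2 F)).
have b : kB F \in T by as_comb (kmul (kP1 F) (kQ2 F)).
have a : kA F \in T by as_comb (2%:R^-1 *: (kmul (kP1 F) (kP2 F) + kmul (kQ1 F) (kQ2 F))).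
have e : kE F \in T by as_comb (2%:R^-1 *: kmul (kC1 F) (kC2 F)).
(* [p1 p2 - q1 q2 = 4 (e - 3 f)] *)
have f : kF F \in T.
  by as_comb (3%:R^-1 *: (kE F - 2%:R^-1 *: (2%:R^-1 *:
    (kmul (kP1 F) (kP2 F) - kmul (kQ1 F) (kQ2 F))))).
apply/eqP; rewrite eqEsubv subvf; apply/subvP => x _; rewrite [x]kvecE.
by as_comb (cf x 0 *: kE F + cf x 1 *: kA F + cf x 2 *: kB F + cf x 3 *: kC1 F
  + cf x 4 *: kC2 F + cf x 5 *: kF F + cf x 6 *: kP1 F + cf x 7 *: kP2 F
  + cf x 8 *: kQ1 F + cf x 9 *: kQ2 F).
Qed.

Lemma sub_M3_of_UW : T != fullv -> uv 1 0 \in T -> wv 1 0 \in T -> wv 0 1 \in T ->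
  (T <= M3 F)%VS.
Proof.
move=> properT u1 w1 w2.
have u2 : uv 0 1 \notin T by apply: contra properT => u2; rewrite subalg_UW_fullv.
have coef_u2 k : k *: uv 0 1 \in T -> k = 0 by rewrite rpredZeq (negbTE u2) orbF => /eqP.
apply/subvP => x xT; apply/mem_M3; split.
- apply/esym/subr0_eq/coef_u2.
  by as_comb (kmul (even_part x) (wv 0 1) - (2%:R^-1 * (cf x 0 + cf x 5)) *: wv 0 1
    - cf x 3 *: uv 1 0).
- apply/eqP; rewrite -oppr_eq0; apply/eqP/coef_u2.
  by as_comb (kmul (even_part x) (wv 1 0) - (2%:R^-1 * (cf x 0 + cf x 5)) *: wv 1 0
    - (cf x 1 + cf x 2) *: uv 1 0).
- apply/esym/subr0_eq/coef_u2.
  by as_comb (2%:R *: odd_part x - (cf x 6 + cf x 8) *: uv 1 0 - (cf x 6 - cf x 8) *: wv 1 0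
    - (cf x 7 + cf x 9) *: wv 0 1).
Qed.

Lemma swapUW_sub_M3 : uv 1 0 \in T -> uv 0 1 \in T -> avoids wv T ->
  (swapUW @: T <= M3 F)%VS.
Proof.
move=> u1 u2 noW; apply/subvP => _ /memv_imgP [x xT ->].
rewrite swapUWE; apply/mem_M3; rewrite /swapUW_fun !cf_kvec.
have /noW [_ e12] : wv (- cf x 3) (cf x 1 + cf x 2) \in T.
  by as_comb (kmul (even_part x) (uv 0 1) - (2%:R^-1 * (cf x 0 + cf x 5)) *: uv 0 1).
have /noW [_ e4] : wv (cf x 1 - cf x 2) (cf x 4) \in T.
  by as_comb (kmul (even_part x) (uv 1 0) - (2%:R^-1 * (cf x 0 + cf x 5)) *: uv 1 0).
have /noW [_ e79] : wv (cf x 6 - cf x 8) (cf x 7 + cf x 9) \in T.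
  by as_comb (2%:R *: odd_part x - (cf x 6 + cf x 8) *: uv 1 0 - (cf x 7 - cf x 9) *: uv 0 1).
by split; [apply/esym/eqP; rewrite -addr_eq0 e12 | rewrite e4 oppr0
  | apply/esym/eqP; rewrite -addr_eq0 e79].
Qed.

Lemma eq0_of_sub_add (a b : F) : a - b = 0 -> a + b = 0 -> a = 0 /\ b = 0.
Proof.
move=> /subr0_eq <- /eqP; rewrite -mulr2n -mulr_natr mulf_eq0 (negbTE two_neq0) orbF.
by move/eqP.
Qed.

Lemma sub_M4_of_UW : uv 1 0 \in T -> wv 1 0 \in T -> uv 0 1 \notin T -> wv 0 1 \notin T ->
  (T <= M4 F)%VS.
Proof.
move=> u1 w1 u2 w2; apply/subvP => x xT; apply/mem_M4.
have uv_b a b : uv a b \in T -> b = 0 by rewrite uv_split; apply: lincomb_notin.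
have wv_d c d : wv c d \in T -> d = 0 by rewrite wv_split; apply: lincomb_notin.
set beta := cf x 7 - cf x 9; set delta := cf x 7 + cf x 9.
have y : uv 0 beta + wv 0 delta \in T.
  by as_comb (2%:R *: odd_part x - (cf x 6 + cf x 8) *: uv 1 0 - (cf x 6 - cf x 8) *: wv 1 0).
have beta0 : beta = 0.
  have /uv_b /eqP : uv 0 (beta ^+ 2) \in T.
    by as_comb (- (2%:R^-1 * 2%:R^-1) *: kmul (kmul (uv 1 0) (uv 0 beta + wv 0 delta))
      (uv 0 beta + wv 0 delta)).
  by rewrite sqrf_eq0 => /eqP.
have /wv_d delta0 : wv 0 delta \in T by move: y; rewrite beta0 /uv !scale0r !add0r.
have [x7 x9] := eq0_of_sub_add beta0 delta0.
split=> //; apply: (wv_d (cf x 1 - cf x 2)).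
by as_comb (kmul (even_part x) (uv 1 0) - (2%:R^-1 * (cf x 0 + cf x 5)) *: uv 1 0).
Qed.

Lemma sub_M3_of_avoid_wv : uv 1 0 \in T -> uv 0 1 \notin T -> avoids wv T -> (T <= M3 F)%VS.
Proof.
move=> u1 u2 noW; apply/subvP => x xT; apply/mem_M3.
have uv_b a b : uv a b \in T -> b = 0 by rewrite uv_split; apply: lincomb_notin.
set beta := cf x 7 - cf x 9; set gamma := cf x 6 - cf x 8; set delta := cf x 7 + cf x 9.
have y : uv 0 beta + wv gamma delta \in T.
  by as_comb (2%:R *: odd_part x - (cf x 6 + cf x 8) *: uv 1 0).
have beta0 : beta = 0.
  have /noW [/eqP] : wv (beta * gamma) (beta * delta) \in T.
    by as_comb ((2%:R^-1 * 2%:R^-1) *: (kmul (kmul (uv 1 0) (uv 0 beta + wv gamma delta))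
      (uv 0 beta + wv gamma delta) + (2%:R * 2%:R * beta) *: (uv 0 beta + wv gamma delta))).
  rewrite mulf_eq0 => /orP [/eqP // | /eqP gamma0 /eqP].
  rewrite mulf_eq0 => /orP [/eqP // | /eqP delta0].
  by apply: (uv_b 0); move: y; rewrite gamma0 delta0 /wv !scale0r !addr0.
have /noW [/subr0_eq x12 x4] : wv (cf x 1 - cf x 2) (cf x 4) \in T.
  by as_comb (kmul (even_part x) (uv 1 0) - (2%:R^-1 * (cf x 0 + cf x 5)) *: uv 1 0).
by split=> //; apply/esym/subr0_eq.
Qed.

Lemma sub_M4_of_p1 : kP1 F \in T ->
  (forall y, y \in T -> [/\ cf y 7 = 0, cf y 8 = 0 & cf y 9 = 0]) -> (T <= M4 F)%VS.
Proof.
move=> p1 oddT_p1; apply/subvP => x xT; apply/mem_M4.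
have [x7 _ x9] := oddT_p1 x xT.
have [_ _] := oddT_p1 _ (mulT (evT xT) p1).
by rewrite basisE /even_part kmul_kvec cf_kvec => x4; split=> //; rewrite -x4; ring.
Qed.

Lemma uv01_wv_eq1 g d : kP1 F \in T -> avoids wv T -> uv 0 1 + wv g d \in T -> d = 1.
Proof.
move=> p1 noW y; have /noW [/subr0_eq // _] : wv (d - 1) 0 \in T.
by as_comb (- (2%:R^-1 * 2%:R^-1) *: kmul (kmul (2%:R *: kP1 F) (uv 0 1 + wv g d))
  (2%:R *: kP1 F) - 2%:R *: kP1 F).
Qed.

Lemma exists_uv01_wv x : kP1 F \in T -> avoids wv T -> x \in T ->
  ~ [/\ cf x 7 = 0, cf x 8 = 0 & cf x 9 = 0] -> exists g, uv 0 1 + wv g 1 \in T.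
Proof.
move=> p1 noW xT x_odd.
set beta := cf x 7 - cf x 9; set delta := cf x 7 + cf x 9.
have z : uv 0 beta + wv (- (2%:R * cf x 8)) delta \in T.
  by as_comb (2%:R *: odd_part x - (cf x 6 + cf x 8) *: (2%:R *: kP1 F)).
have [beta0 | beta_neq0] := eqVneq beta 0.
  move: z; rewrite beta0 /uv !scale0r !add0r => /noW [/eqP x8 delta0]; case: x_odd.
  have [x7 x9] := eq0_of_sub_add beta0 delta0.
  by move: x8; rewrite oppr_eq0 mulf_eq0 (negbTE two_neq0) => /eqP.
exists (- (2%:R * cf x 8) / beta).
have y : uv 0 1 + wv (- (2%:R * cf x 8) / beta) (delta / beta) \in T.
  by as_comb (beta^-1 *: (uv 0 beta + wv (- (2%:R * cf x 8)) delta)).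
by move: (y); rewrite (uv01_wv_eq1 p1 noW y).
Qed.

Lemma sub_M2 : kP1 F \in T -> kP2 F \in T -> avoids wv T -> (T <= M2 F)%VS.
Proof.
move=> p1 p2 noW.
have odd89 y : y \in T -> cf y 8 = 0 /\ cf y 9 = 0.
  move=> yT; have /noW [-> /eqP] : wv (cf y 8) (- cf y 9) \in T.
    by as_comb (- 2%:R^-1 *: (2%:R *: odd_part y - (cf y 6 + cf y 8) *: (2%:R *: kP1 F)
      - (cf y 7 - cf y 9) *: (2%:R *: kP2 F))).
  by rewrite oppr_eq0 => /eqP.
apply/subvP => x xT; apply/mem_M2; have [x8 x9] := odd89 x xT.
have [] := odd89 _ (mulT (evT xT) p1); have [x3 _] := odd89 _ (mulT (evT xT) p2).
move: x3; rewrite !basisE /even_part !kmul_kvec !cf_kvec => x3 x2 x4.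
by split=> //; [rewrite -x2 | rewrite -x3 | rewrite -x4]; ring.
Qed.

End Containment.

(** * Reduction to M1, M2, M3, M4 *)

Section Reduction.
Variable F : fieldType.
Hypotheses (two_neq0 : (2%:R : F) != 0) (three_neq0 : (3%:R : F) != 0).
Local Notation V := (V F).
Local Notation uv := (@uv F).
Local Notation wv := (@wv F).
Implicit Types T : {vspace V}.

Lemma not_avoids (g : F -> F -> V) T :
  ~ avoids g T -> exists a b, ((a != 0) || (b != 0)) /\ g a b \in T.
Proof.
rewrite /avoids => /not_all_ex_not [a] /not_all_ex_not [b] nab.
have [abT ab_neq0] := imply_to_and _ _ nab.
exists a, b; split=> //; rewrite -negb_and; apply/negP => /andP [/eqP a0 /eqP b0].
exact: ab_neq0.
Qed.

Lemma conj_std_uv10_wv10 T : subalgebra T -> T != fullv -> uv 1 0 \in T -> wv 1 0 \in T ->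
  conj_std T.
Proof.
move=> subT properT u1 w1.
have [u2 | u2] := boolP (uv 0 1 \in T).
  apply: (conj_std_img autom_swapUW); apply/sub_conj_std/Or43.
  apply: (sub_M3_of_UW two_neq0 three_neq0 (subalg_img autom_swapUW subT)).
  - exact: autom_img_proper autom_swapUW properT.
  - by rewrite -swapUW_wv memv_img.
  - by rewrite -swapUW_uv memv_img.
  - by rewrite -swapUW_uv memv_img.
have [w2 | w2] := boolP (wv 0 1 \in T).
  by apply/sub_conj_std/Or43; apply: (sub_M3_of_UW two_neq0 three_neq0 subT).
by apply/sub_conj_std/Or44; apply: (sub_M4_of_UW two_neq0 subT).
Qed.

Lemma conj_std_uv10 T : subalgebra T -> T != fullv -> uv 1 0 \in T -> conj_std T.
Proof.
move=> subT properT u1.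
case: (classic (avoids wv T)) => [noW | /not_avoids [c [d [cd_neq0 cdT]]]].
  have [u2 | u2] := boolP (uv 0 1 \in T).
    apply: (conj_std_img autom_swapUW); apply/sub_conj_std/Or43.
    exact: (swapUW_sub_M3 two_neq0 subT).
  by apply/sub_conj_std/Or43; apply: (sub_M3_of_avoid_wv two_neq0 subT).
have [phi [autphi phiU phi_cd]] := orbit_wv two_neq0 cd_neq0.
apply: (conj_std_img autphi); apply: conj_std_uv10_wv10.
- exact: subalg_img.
- exact: autom_img_proper.
- by rewrite -phiU memv_img.
- by rewrite -phi_cd memv_img.
Qed.

Lemma conj_std_uv T a b : subalgebra T -> T != fullv ->
  (a != 0) || (b != 0) -> uv a b \in T -> conj_std T.
Proof.
move=> subT properT ab_neq0 abT; have [phi [autphi _ phi_ab]] := orbit_uv two_neq0 ab_neq0.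
apply: (conj_std_img autphi); apply: conj_std_uv10.
- exact: subalg_img.
- exact: autom_img_proper.
- by rewrite -phi_ab memv_img.
Qed.

Lemma conj_std_wv T c d : subalgebra T -> T != fullv ->
  (c != 0) || (d != 0) -> wv c d \in T -> conj_std T.
Proof.
move=> subT properT cd_neq0 cdT; apply: (conj_std_img autom_swapUW).
apply: (conj_std_uv (subalg_img autom_swapUW subT) (autom_img_proper autom_swapUW properT) cd_neq0).
by rewrite -swapUW_wv memv_img.
Qed.

Lemma conj_std_meet T : subalgebra T -> T != fullv ->
  ~ (avoids uv T /\ avoids wv T) -> conj_std T.
Proof.
move=> subT properT /not_and_or [/not_avoids [a [b [ab abT]]] | /not_avoids [c [d [cd cdT]]]].
  exact: conj_std_uv abT.
exact: conj_std_wv cdT.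
Qed.

Lemma conj_std_p1 T : subalgebra T -> T != fullv -> kP1 F \in T -> conj_std T.
Proof.
move=> subT properT p1.
case: (classic (avoids uv T /\ avoids wv T)) => [[_ noW] | meet]; last exact: conj_std_meet.
case: (classic (forall y, y \in T -> [/\ cf y 7 = 0, cf y 8 = 0 & cf y 9 = 0])) => [odd_p1 | ].
  by apply/sub_conj_std/Or44; apply: (sub_M4_of_p1 subT).
move=> /not_all_ex_not [x nx]; have [xT x_odd] := imply_to_and _ _ nx.
have [g gT] := exists_uv01_wv two_neq0 subT p1 noW xT x_odd.
pose psi := (upperU (- (2%:R^-1 * g)) \o swapUW)%VF.
have autpsi : is_autom psi := autom_comp autom_swapUW (autom_upperU _).
have psiE a b c d : psi (uv a b + wv c d) = uv (c - g * d) d + wv a b.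
  rewrite comp_lfunE linearD /= swapUW_uv swapUW_wv linearD /= upperU_uv upperU_wv addrC.
  by congr (uv _ _ + _); field.
apply: (conj_std_img autpsi).
have subT' := subalg_img autpsi subT; have properT' := autom_img_proper autpsi properT.
have p1' : kP1 F \in (psi @: T)%VS.
  have psi_p1 : psi (kP1 F) = kP1 F by rewrite kP1_uv_wv // linearZ /= psiE mulr0 subr0.
  by rewrite -psi_p1 memv_img.
have p2' : kP2 F \in (psi @: T)%VS.
  have psi_g : psi (uv 0 1 + wv g 1) = uv 0 1 + wv 0 1 by rewrite psiE mulr1 subrr.
  by rewrite kP2_uv_wv // -psi_g rpredZ // memv_img.
case: (classic (avoids wv (psi @: T))) => [noW' | /not_avoids [c [d [cd cdT]]]].
  by apply/sub_conj_std/Or42; apply: (sub_M2 two_neq0 subT' p1' p2' noW').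
exact: conj_std_wv cd cdT.
Qed.

Lemma proper_subalg_conj_std T : subalgebra T -> T != fullv -> conj_std T.
Proof.
move=> subT properT.
case: (classic (avoids uv T /\ avoids wv T)) => [[noU noW] | meet]; last exact: conj_std_meet.
case: (classic (forall x, x \in T -> odd_part x = 0)) => [evenT | ].
  apply/sub_conj_std/Or41; apply/subvP => x xT.
  by rewrite -(even_add_odd_part x) evenT // addr0 even_part_even.
move=> /not_all_ex_not [x nx]; have [xT /eqP x_odd] := imply_to_and _ _ nx.
have oddT : 2%:R *: odd_part x \in T by rewrite rpredZ // subalg_odd_part.
have odd_neq0 : 2%:R *: odd_part x != 0 by rewrite scaler_eq0 negb_or two_neq0.
have decomp := odd_part_uv_wv x.
have ab : (cf x 6 + cf x 8 != 0) || (cf x 7 - cf x 9 != 0).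
  rewrite -negb_and; apply: contra odd_neq0 => /andP [/eqP a0 /eqP b0].
  move: oddT; rewrite decomp a0 b0 /uv !scale0r !add0r => /noW [-> ->].
  by rewrite /wv !scale0r addr0.
have cd : (cf x 6 - cf x 8 != 0) || (cf x 7 + cf x 9 != 0).
  rewrite -negb_and; apply: contra odd_neq0 => /andP [/eqP c0 /eqP d0].
  move: oddT; rewrite decomp c0 d0 /wv !scale0r !addr0 => /noU [-> ->].
  by rewrite /uv !scale0r addr0.
have [phiU [autU phiU_W phiU_ab]] := orbit_uv two_neq0 ab.
have [phiW [autW phiW_U phiW_cd]] := orbit_wv two_neq0 cd.
have autpsi := autom_comp autU autW.
apply: (conj_std_img autpsi); apply: conj_std_p1.
- exact: subalg_img.
- exact: autom_img_proper.
- have psi_x : (phiW \o phiU)%VF (2%:R *: odd_part x) = uv 1 0 + wv 1 0.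
    by rewrite decomp comp_lfunE linearD /= phiU_ab phiU_W linearD /= phiW_U phiW_cd.
  by rewrite kP1_uv_wv // -psi_x rpredZ // memv_img.
Qed.

End Reduction.

Theorem theorem4p1 (F : closedFieldType)
  (h2 : (2%N \notin [pchar F])) (h3 : (3%N \notin [pchar F]))
  (S : {vspace V F}) :
  is_maximal_subalg S ->
  exists phi : 'End(V F), is_autom phi /\
    [\/ (phi @: S)%VS = M1 F, (phi @: S)%VS = M2 F,
        (phi @: S)%VS = M3 F | (phi @: S)%VS = M4 F].
Proof.
move=> maxS; have [subS [properS _]] := maxS.
have two_neq0 : (2%:R : F) != 0 by move: h2; rewrite inE.
have three_neq0 : (3%:R : F) != 0 by move: h3; rewrite inE.
have [psi [autpsi sub_std]] :=
  proper_subalg_conj_std two_neq0 three_neq0 (proj1 (is_subalgP S) subS) properS.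
exists psi; split=> //; case: sub_std => sub_std.
- by apply/Or41/(maximal_img_eq maxS autpsi (subalg_M1 F) (M1_proper F)).
- by apply/Or42/(maximal_img_eq maxS autpsi (subalg_M2 F) (M2_proper F)).
- by apply/Or43/(maximal_img_eq maxS autpsi (subalg_M3 F) (M3_proper F)).
- by apply/Or44/(maximal_img_eq maxS autpsi (subalg_M4 F) (M4_proper F)).
Qed.
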